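(* For $\tau,t\in\mathbb{R}$ and integer $n\ge0$ let $$\mu_{2n}(\tau,t)=\int_{-\infty}^{\infty}x^{2n}\exp(-x^6+\tau x^4+tx^2)\,dx.$$ Then $$\frac{\partial^3\mu_{2n}}{\partial t^3}-\tfrac23\tau\frac{\partial^2\mu_{2n}}{\partial t^2}-\tfrac13t\frac{\partial\mu_{2n}}{\partial t}-\tfrac16(2n+1)\mu_{2n}=0.$$ *)

From Stdlib Require Import Reals.
From Coquelicot Require Import Coquelicot.
Open Scope R_scope.

Definition mu (n : nat) (tau t : R) : R :=
  RInt_gen (fun x => x ^ (2 * n) * exp (- x ^ 6 + tau * x ^ 4 + t * x ^ 2))
    (Rbar_locally m_infty) (Rbar_locally p_infty).

From Stdlib Require Import Reals Lra Lia Psatz Classical.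
From Coquelicot Require Import Coquelicot.
Open Scope R_scope.

(* Differentiating under the integral sign multiplies the integrand by x^2, so
   the k-th t-derivative of mu n tau is mu (n + k) tau; the interchange is
   justified by |e^y - 1 - y| <= y^2 e^|y| together with the fact that
   exp (- x^6 + tau x^4 + t x^2) beats every power of x.  The differential
   equation is then the statement that the integral over the real line of the
   derivative of x^(2n+1) exp (- x^6 + tau x^4 + t x^2) vanishes, this function
   tending to 0 at both ends. *)

Lemma pow_1_plus_le_exp (m : nat) (y : R) : -1 <= y -> (1 + y) ^ m <= exp (INR m * y).
Proof.
  intros Hy. induction m as [|m IH].
  - rewrite Rmult_0_l, exp_0. simpl. lra.
  - rewrite S_INR, Rmult_plus_distr_r, Rmult_1_l, exp_plus, (Rmult_comm (exp _)). simpl.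
    apply Rmult_le_compat; [lra | apply pow_le; lra | apply exp_ineq1_le | exact IH].
Qed.

Lemma exp_le_compat (x y : R) : x <= y -> exp x <= exp y.
Proof. intros [H | ->]; [left; apply exp_increasing, H | right; reflexivity]. Qed.

Lemma cubic_dominates_quadratic (A B : R) :
  exists D, forall y, 0 <= y -> A * y ^ 2 + B * y <= y ^ 3 + D.
Proof.
  set (Y := Rabs A + Rabs B + 1).
  pose proof (Rle_abs A). pose proof (Rle_abs B).
  pose proof (Rabs_pos A). pose proof (Rabs_pos B).
  exists (Rabs A * Y ^ 2 + Rabs B * Y). intros y Hy.
  destruct (Rle_or_lt y Y) as [Hle | Hlt].
  - assert (y ^ 2 <= Y ^ 2) by (apply pow_incr; lra). nra.
  - assert (Y * y ^ 2 <= y ^ 3) by nra. unfold Y in *. nra.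
Qed.

Lemma sextic_exp_bounded (m : nat) (tau s : R) :
  exists C, forall x, (1 + x ^ 2) ^ m * exp (- x ^ 6 + tau * x ^ 4 + s * x ^ 2) <= C.
Proof.
  destruct (cubic_dominates_quadratic tau (s + INR m)) as [D HD].
  exists (exp D). intros x.
  pose proof (pow2_ge_0 x) as Hx.
  eapply Rle_trans.
  { apply Rmult_le_compat_r; [left; apply exp_pos | apply pow_1_plus_le_exp; lra]. }
  rewrite <- exp_plus. apply exp_le_compat.
  specialize (HD (x ^ 2) Hx).
  replace (x ^ 6) with ((x ^ 2) ^ 3) by ring. replace (x ^ 4) with ((x ^ 2) ^ 2) by ring.
  lra.
Qed.

Lemma abs_pow_le_1_plus_sqr_pow (k : nat) (x : R) : Rabs (x ^ k) <= (1 + x ^ 2) ^ k.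
Proof.
  rewrite <- RPow_abs. apply pow_incr. split; [apply Rabs_pos|].
  pose proof (pow2_ge_0 (Rabs x - 1)). rewrite <- (pow2_abs x). nra.
Qed.

Lemma monomial_sextic_exp_decay (k : nat) (tau s : R) :
  exists C, forall x,
    Rabs (x ^ k * exp (- x ^ 6 + tau * x ^ 4 + s * x ^ 2)) * (1 + x ^ 2) <= C.
Proof.
  destruct (sextic_exp_bounded (S k) tau s) as [C HC].
  exists C. intros x. eapply Rle_trans; [|apply (HC x)].
  rewrite Rabs_mult, (Rabs_right (exp _)) by (left; apply exp_pos).
  replace ((1 + x ^ 2) ^ S k * exp (- x ^ 6 + tau * x ^ 4 + s * x ^ 2))
    with ((1 + x ^ 2) ^ k * exp (- x ^ 6 + tau * x ^ 4 + s * x ^ 2) * (1 + x ^ 2))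
    by (simpl; ring).
  apply Rmult_le_compat_r; [pose proof (pow2_ge_0 x); lra|].
  apply Rmult_le_compat_r; [left; apply exp_pos | apply abs_pow_le_1_plus_sqr_pow].
Qed.

Lemma filterlim_p_infty_increasing_bounded (G : R -> R) (B : R) :
  (forall a b, a <= b -> G a <= G b) -> (forall x, G x <= B) ->
  exists L, filterlim G (Rbar_locally p_infty) (locally L).
Proof.
  intros Hincr Hbnd.
  destruct (completeness (fun y => exists x, y = G x)) as [L [Hub Hlub]].
  { exists B. intros y [x ->]. apply Hbnd. }
  { exists (G 0), 0. reflexivity. }
  exists L. apply filterlim_locally. intros eps.
  assert (Hx0 : exists x0, L - eps < G x0).
  { apply NNPP. intros Hnone.
    assert (L <= L - eps).
    { apply Hlub. intros y [x ->]. apply Rnot_lt_le. intros Hlt. apply Hnone. now exists x. }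
    pose proof (cond_pos eps). lra. }
  destruct Hx0 as [x0 Hx0]. exists x0. intros x Hx.
  assert (G x <= L) by (apply Hub; now exists x).
  assert (G x0 <= G x) by (apply Hincr; lra).
  change (Rabs (G x - L) < eps). apply Rabs_def1; lra.
Qed.

Lemma filterlim_m_infty_increasing_bounded (G : R -> R) (B : R) :
  (forall a b, a <= b -> G a <= G b) -> (forall x, B <= G x) ->
  exists L, filterlim G (Rbar_locally m_infty) (locally L).
Proof.
  intros Hincr Hbnd.
  destruct (filterlim_p_infty_increasing_bounded (fun y => - G (- y)) (- B)) as [L HL].
  { intros a b Hab. apply Ropp_le_contravar, Hincr. lra. }
  { intros x. apply Ropp_le_contravar, Hbnd. }
  exists (- L).
  apply (filterlim_ext (fun x => - (- G (- - x)))).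
  { intros x. now rewrite Ropp_involutive, Ropp_involutive. }
  eapply filterlim_comp; [|apply (filterlim_opp L)].
  exact (filterlim_comp _ _ _ Ropp _ _ _ _ (filterlim_Rbar_opp m_infty) HL).
Qed.

Lemma filterlim_0_of_bounded_mul {T : Type} (F : (T -> Prop) -> Prop) {FF : Filter F}
  (g h : T -> R) (C : R) :
  (forall x, Rabs (g x) * h x <= C) -> filterlim h F (Rbar_locally p_infty) ->
  filterlim g F (locally 0).
Proof.
  intros Hbnd Hh. apply filterlim_locally. intros eps.
  pose proof (cond_pos eps) as Heps.
  apply (filter_imp (fun x => Rmax 0 C / eps < h x)).
  - intros x Hx.
    assert (Hpos : 0 < h x).
    { apply Rle_lt_trans with (Rmax 0 C / eps); [|exact Hx].
      apply Rdiv_le_0_compat; [apply Rmax_l | exact Heps]. }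
    assert (Hlt : Rmax 0 C < eps * h x).
    { apply (Rmult_lt_compat_l eps) in Hx; [|exact Heps].
      now replace (eps * (Rmax 0 C / eps)) with (Rmax 0 C) in Hx by (field; lra). }
    assert (Habs : Rabs (g x) < eps).
    { apply (Rmult_lt_reg_r (h x)); [exact Hpos|].
      pose proof (Hbnd x). pose proof (Rmax_r 0 C). lra. }
    change (Rabs (g x - 0) < eps). now rewrite Rminus_0_r.
  - apply Hh. now exists (Rmax 0 C / eps).
Qed.

Lemma filterlim_1_plus_sqr_infty :
  filterlim (fun x => 1 + x ^ 2) (Rbar_locally p_infty) (Rbar_locally p_infty) /\
  filterlim (fun x => 1 + x ^ 2) (Rbar_locally m_infty) (Rbar_locally p_infty).
Proof.
  split; intros P [M HM].
  - exists M. intros x Hx. apply HM. nra.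
  - exists (- M). intros x Hx. apply HM. nra.
Qed.

Lemma is_RInt_gen_antiderivative (G g : R -> R) (la lb : R) :
  (forall x, is_derive G x (g x)) -> (forall x, continuous g x) ->
  filterlim G (Rbar_locally m_infty) (locally la) ->
  filterlim G (Rbar_locally p_infty) (locally lb) ->
  is_RInt_gen g (Rbar_locally m_infty) (Rbar_locally p_infty) (lb - la).
Proof.
  intros HG Hg Hla Hlb.
  assert (HD : forall x, Derive G x = g x) by (intros x; apply is_derive_unique, HG).
  apply (is_RInt_gen_ext (Derive G)).
  { apply filter_forall. intros ab x _. apply HD. }
  apply is_RInt_gen_Derive; [| |exact Hla|exact Hlb]; apply filter_forall; intros ab x _.
  - eexists. apply HG.
  - apply (continuous_ext g); [intros y; now rewrite HD | apply Hg].
Qed.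

Lemma is_RInt_div_1_plus_sqr (C a b : R) :
  is_RInt (fun y => C / (1 + y ^ 2)) a b (C * (atan b - atan a)).
Proof.
  replace (C * (atan b - atan a)) with (minus (C * atan b) (C * atan a))
    by (unfold minus, plus, opp; simpl; ring).
  apply (is_RInt_derive (fun y => C * atan y)).
  - intros x _. apply is_derive_Reals.
    unfold Rdiv. apply derivable_pt_lim_scal, derivable_pt_lim_atan.
  - intros x _. apply (ex_derive_continuous (fun y => C / (1 + y ^ 2))).
    auto_derive. pose proof (pow2_ge_0 x). lra.
Qed.

Section Decaying.

Variables (f : R -> R) (C : R).
Hypothesis f_cont : forall x, continuous f x.
Hypothesis f_ge0 : forall x, 0 <= f x.
Hypothesis f_decay : forall x, f x * (1 + x ^ 2) <= C.

Let ex_RInt_f (a b : R) : ex_RInt f a b.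
Proof. apply (@ex_RInt_continuous R_CompleteNormedModule). intros x _. apply f_cont. Qed.

Lemma RInt_decaying_bounds (a b : R) : a <= b -> 0 <= RInt f a b <= C * PI.
Proof.
  intros Hab. split; [apply RInt_ge_0; auto using ex_RInt_f|].
  apply Rle_trans with (RInt (fun y => C / (1 + y ^ 2)) a b).
  - apply RInt_le; [exact Hab | apply ex_RInt_f | eexists; apply is_RInt_div_1_plus_sqr |].
    intros x _. pose proof (pow2_ge_0 x). apply (Rmult_le_reg_r (1 + x ^ 2)); [lra|].
    unfold Rdiv. rewrite Rmult_assoc, Rinv_l, Rmult_1_r by lra. apply f_decay.
  - rewrite (is_RInt_unique _ _ _ _ (is_RInt_div_1_plus_sqr C a b)).
    assert (0 <= C) by (specialize (f_decay 0); specialize (f_ge0 0); nra).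
    pose proof (atan_bound a). pose proof (atan_bound b).
    apply Rmult_le_compat_l; lra.
Qed.

Lemma ex_RInt_gen_decaying : ex_RInt_gen f (Rbar_locally m_infty) (Rbar_locally p_infty).
Proof.
  set (G := fun x => RInt f 0 x).
  assert (HG : forall x, is_derive G x (f x)).
  { intros x. apply (is_derive_RInt f G 0 x); [|apply f_cont].
    apply filter_forall. intros b. apply (@RInt_correct R_CompleteNormedModule), ex_RInt_f. }
  assert (Hincr : forall a b, a <= b -> 0 <= G b - G a <= C * PI).
  { intros a b Hab.
    assert (Hdiff : G b - G a = RInt f a b).
    { unfold G. rewrite <- (RInt_Chasles f 0 a b) by apply ex_RInt_f.
      unfold plus; simpl. ring. }
    rewrite Hdiff. now apply RInt_decaying_bounds. }
  assert (HG0 : G 0 = 0) by apply (@RInt_point R_CompleteNormedModule).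
  assert (Hbnd : forall x, - (C * PI) <= G x <= C * PI).
  { intros x. pose proof (Hincr 0 0 (Rle_refl 0)).
    destruct (Rle_or_lt 0 x) as [Hx|Hx].
    - pose proof (Hincr 0 x Hx). lra.
    - pose proof (Hincr x 0 (Rlt_le _ _ Hx)). lra. }
  destruct (filterlim_p_infty_increasing_bounded G (C * PI)) as [lb Hlb].
  { intros a b Hab. pose proof (Hincr a b Hab). lra. }
  { intros x. apply Hbnd. }
  destruct (filterlim_m_infty_increasing_bounded G (- (C * PI))) as [la Hla].
  { intros a b Hab. pose proof (Hincr a b Hab). lra. }
  { intros x. apply Hbnd. }
  exists (lb - la). now apply (is_RInt_gen_antiderivative G).
Qed.

End Decaying.

Lemma exp_taylor1_bound (y : R) : Rabs (exp y - 1 - y) <= y ^ 2 * exp (Rabs y).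
Proof.
  pose proof (exp_ineq1_le y) as Hlow. pose proof (exp_pos y).
  assert (Hup : exp y * (1 - y) <= 1).
  { pose proof (exp_ineq1_le (- y)).
    assert (exp y * exp (- y) = 1) by (rewrite <- exp_plus, Rplus_opp_r; apply exp_0).
    nra. }
  rewrite Rabs_right by lra.
  destruct (Rle_or_lt 0 y) as [Hy|Hy].
  - rewrite Rabs_right by lra. nra.
  - rewrite Rabs_left by lra.
    assert (1 <= exp (- y)) by (pose proof (exp_ineq1_le (- y)); lra).
    nra.
Qed.

Lemma is_derive_quadratic_remainder (f : R -> R) (s l K : R) :
  (forall h, Rabs h <= 1 -> Rabs (f (s + h) - f s - h * l) <= K * h ^ 2) ->
  is_derive f s l.
Proof.
  intros Hrem. apply is_derive_Reals. intros eps Heps.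
  assert (HK : 0 < Rabs K + 1) by (pose proof (Rabs_pos K); lra).
  assert (Hdelta : 0 < Rmin 1 (eps / (Rabs K + 1))).
  { apply Rmin_pos; [lra | now apply Rdiv_lt_0_compat]. }
  exists (mkposreal _ Hdelta). intros h Hh0 Hh. simpl in Hh.
  assert (Hh1 : Rabs h <= 1) by (pose proof (Rmin_l 1 (eps / (Rabs K + 1))); lra).
  assert (Hh2 : Rabs h < eps / (Rabs K + 1)) by (pose proof (Rmin_r 1 (eps / (Rabs K + 1))); lra).
  assert (Hhpos : 0 < Rabs h) by now apply Rabs_pos_lt.
  specialize (Hrem h Hh1).
  replace ((f (s + h) - f s) / h - l) with ((f (s + h) - f s - h * l) / h) by (field; exact Hh0).
  rewrite Rabs_div by exact Hh0.
  apply (Rmult_lt_reg_r (Rabs h)); [exact Hhpos|].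
  unfold Rdiv. rewrite Rmult_assoc, Rinv_l, Rmult_1_r by lra.
  assert (Habs : Rabs h * (Rabs K + 1) < eps).
  { apply (Rmult_lt_reg_r (/ (Rabs K + 1))); [now apply Rinv_0_lt_compat|].
    rewrite Rmult_assoc, Rinv_r, Rmult_1_r by lra. exact Hh2. }
  rewrite <- (pow2_abs h) in Hrem. pose proof (Rle_abs K). nra.
Qed.

Definition weight (m : nat) (tau s x : R) : R :=
  x ^ (2 * m) * exp (- x ^ 6 + tau * x ^ 4 + s * x ^ 2).

Lemma weight_ge0 (m : nat) (tau s x : R) : 0 <= weight m tau s x.
Proof.
  unfold weight. rewrite pow_mult.
  apply Rmult_le_pos; [apply pow_le, pow2_ge_0 | left; apply exp_pos].
Qed.

Lemma weight_succ (m : nat) (tau s x : R) : weight (S m) tau s x = weight m tau s x * x ^ 2.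
Proof. unfold weight. replace (2 * S m)%nat with (2 * m + 2)%nat by lia. rewrite pow_add. ring. Qed.

Lemma weight_shift (m : nat) (tau s h x : R) :
  weight m tau (s + h) x = weight m tau s x * exp (h * x ^ 2).
Proof. unfold weight. rewrite Rmult_assoc, <- exp_plus. do 2 f_equal. ring. Qed.

Lemma continuous_weight (m : nat) (tau s x : R) : continuous (weight m tau s) x.
Proof. apply (ex_derive_continuous (weight m tau s)). unfold weight. auto_derive. exact I. Qed.

Lemma is_RInt_gen_mu (m : nat) (tau s : R) :
  is_RInt_gen (weight m tau s) (Rbar_locally m_infty) (Rbar_locally p_infty) (mu m tau s).
Proof.
  apply (@RInt_gen_correct R_CompleteNormedModule);
    try apply Proper_StrongProper, Rbar_locally_filter.
  destruct (monomial_sextic_exp_decay (2 * m) tau s) as [C HC].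
  apply (ex_RInt_gen_decaying _ C); [apply continuous_weight | apply weight_ge0 |].
  intros x. rewrite <- (Rabs_right (weight m tau s x)) by apply Rle_ge, weight_ge0.
  apply HC.
Qed.

Lemma mu_taylor1_bound (m : nat) (tau s h : R) : Rabs h <= 1 ->
  Rabs (mu m tau (s + h) - mu m tau s - h * mu (S m) tau s)
    <= mu (S (S m)) tau (s + 1) * h ^ 2.
Proof.
  intros Hh.
  assert (Hord : filter_prod (Rbar_locally m_infty) (Rbar_locally p_infty)
                   (fun ab : R * R => fst ab <= snd ab)).
  { apply (Filter_prod _ _ _ (fun x => x < 0) (fun x => 0 < x)); try now exists 0.
    intros a b Ha Hb. simpl. lra. }
  assert (Hpt : forall x,
    Rabs (weight m tau (s + h) x - weight m tau s x - h * weight (S m) tau s x)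
      <= h ^ 2 * weight (S (S m)) tau (s + 1) x).
  { intros x. rewrite !weight_succ, !weight_shift.
    pose proof (weight_ge0 m tau s x) as Hw.
    replace (weight m tau s x * exp (h * x ^ 2) - weight m tau s x - h * (weight m tau s x * x ^ 2))
      with (weight m tau s x * (exp (h * x ^ 2) - 1 - h * x ^ 2)) by ring.
    rewrite Rabs_mult, (Rabs_right (weight m tau s x)) by lra.
    replace (h ^ 2 * (weight m tau s x * exp (1 * x ^ 2) * x ^ 2 * x ^ 2))
      with (weight m tau s x * ((h * x ^ 2) ^ 2 * exp (1 * x ^ 2))) by ring.
    apply Rmult_le_compat_l; [exact Hw|].
    eapply Rle_trans; [apply exp_taylor1_bound|].
    apply Rmult_le_compat_l; [apply pow2_ge_0|]. apply exp_le_compat.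
    rewrite Rabs_mult, (Rabs_right (x ^ 2)) by apply Rle_ge, pow2_ge_0.
    apply Rmult_le_compat_r; [apply pow2_ge_0 | exact Hh]. }
  pose proof (is_RInt_gen_minus _ _ _ _
                (is_RInt_gen_minus _ _ _ _ (is_RInt_gen_mu m tau (s + h)) (is_RInt_gen_mu m tau s))
                (is_RInt_gen_scal _ h _ (is_RInt_gen_mu (S m) tau s))) as Hrem.
  pose proof (is_RInt_gen_scal _ (h ^ 2) _ (is_RInt_gen_mu (S (S m)) tau (s + 1))) as Hdom.
  rewrite (Rmult_comm (mu _ _ _) (h ^ 2)).
  refine (RInt_gen_norm (V := R_CompleteNormedModule) _ _ _ _ Hord
            (filter_forall _ (fun ab x _ => _)) Hrem Hdom).
  exact (Hpt x).
Qed.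

Lemma is_derive_mu (m : nat) (tau s : R) : is_derive (fun s => mu m tau s) s (mu (S m) tau s).
Proof.
  apply (is_derive_quadratic_remainder _ _ _ (mu (S (S m)) tau (s + 1))).
  apply mu_taylor1_bound.
Qed.

Lemma Derive_n_mu (n k : nat) (tau s : R) :
  Derive_n (fun s => mu n tau s) k s = mu (n + k) tau s.
Proof.
  revert s. induction k as [|k IH]; intros s; simpl.
  - now rewrite Nat.add_0_r.
  - rewrite (Derive_ext _ _ _ IH), Nat.add_succ_r. apply is_derive_unique, is_derive_mu.
Qed.

Lemma mu_moment_recurrence (n : nat) (tau t : R) :
  (2 * INR n + 1) * mu n tau t - 6 * mu (S (S (S n))) tau t
  + 4 * tau * mu (S (S n)) tau t + 2 * t * mu (S n) tau t = 0.
Proof.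
  set (g := fun x => (2 * INR n + 1) * weight n tau t x - 6 * weight (S (S (S n))) tau t x
                     + 4 * tau * weight (S (S n)) tau t x + 2 * t * weight (S n) tau t x).
  set (G := fun x => x ^ S (2 * n) * exp (- x ^ 6 + tau * x ^ 4 + t * x ^ 2)).
  assert (HG : forall x, is_derive G x (g x)).
  { intros x. unfold G, g. rewrite !weight_succ. unfold weight.
    replace (2 * INR n + 1) with (INR (S (2 * n))) by (rewrite S_INR, mult_INR; simpl; ring).
    generalize (2 * n)%nat as k. intros k.
    auto_derive; [exact I|].
    (* auto_derive unfolds INR (S k) by one step *)
    change (match k with 0%nat => 1 | S _ => INR k + 1 end) with (INR (S k)).
    simpl pow. ring. }
  assert (Hg : forall x, continuous g x).
  { intros x. apply (ex_derive_continuous g). unfold g, weight. auto_derive. exact I. }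
  destruct (monomial_sextic_exp_decay (S (2 * n)) tau t) as [C HC].
  destruct filterlim_1_plus_sqr_infty as [Hp Hm].
  pose proof (is_RInt_gen_antiderivative G g 0 0 HG Hg
                (filterlim_0_of_bounded_mul _ G _ C HC Hm)
                (filterlim_0_of_bounded_mul _ G _ C HC Hp)) as Hzero.
  assert (Hmoments : is_RInt_gen g (Rbar_locally m_infty) (Rbar_locally p_infty)
    ((2 * INR n + 1) * mu n tau t - 6 * mu (S (S (S n))) tau t
     + 4 * tau * mu (S (S n)) tau t + 2 * t * mu (S n) tau t)).
  { exact (is_RInt_gen_plus _ _ _ _
             (is_RInt_gen_plus _ _ _ _
                (is_RInt_gen_minus _ _ _ _
                   (is_RInt_gen_scal _ _ _ (is_RInt_gen_mu n tau t))
                   (is_RInt_gen_scal _ _ _ (is_RInt_gen_mu (S (S (S n))) tau t)))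
                (is_RInt_gen_scal _ _ _ (is_RInt_gen_mu (S (S n)) tau t)))
             (is_RInt_gen_scal _ _ _ (is_RInt_gen_mu (S n) tau t))). }
  rewrite <- (is_RInt_gen_unique _ _ Hmoments), (is_RInt_gen_unique _ _ Hzero).
  ring.
Qed.

Theorem lemma5p5 (n : nat) (tau t : R) :
  Derive_n (fun s => mu n tau s) 3 t
  - 2 / 3 * tau * Derive_n (fun s => mu n tau s) 2 t
  - 1 / 3 * t * Derive_n (fun s => mu n tau s) 1 t
  - 1 / 6 * (2 * INR n + 1) * mu n tau t = 0.
Proof.
  rewrite !Derive_n_mu, <- !plus_n_Sm, <- plus_n_O.
  pose proof (mu_moment_recurrence n tau t). lra.
Qed.
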